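(* Let $A$ be a pca and $f:A\rightharpoonup A$ a partial function. Then the identity function $F=\mathrm{id}:A\to A[f]$ is computationally dense, and it satisfies condition (in): there are $m,c\in A$ such that $m$ witnesses computational density of $F$ and for every $b\in A$, $c\cdot^f b$ is defined and $m\cdot^f(c\cdot^f b)=b$.
   Context: A pca is a set $A$ with a partial binary application admitting $K,S$ with $Kab=a$, $Sab{\downarrow}$, $Sabc\simeq ac(bc)$. Each pca has fixed Booleans $\top,\bot$, pairing $p$ with projections $p_0,p_1$ ($p_0(pab)=a$, $p_1(pab)=b$), and a coding $[u_0,\dots,u_{n-1}]$ of finite sequences with concatenation $\ast$. For partial $f:A\rightharpoonup A$, the pca $A[f]$ has underlying set $A$ and application $\cdot^f$: an $f$-dialogue between $a,b$ is a code $u=[u_0,\dots,u_{n-1}]$ such that for each $i<n$ there is $v_i$ with $a\cdot([b]\ast[u_0,\dots,u_{i-1}])=p\bot v_i$ and $f(v_i)$ defined and equal to $u_i$; and $a\cdot^f b=c$ iff there is an $f$-dialogue $u$ between $a,b$ with $a\cdot([b]\ast u)=p\top c$. The map $a\mapsto\{a\}$ is an applicative morphism $A\to A[f]$. For pcas $A,B$ and a function $F:A\to B$ such that $a\mapsto\{F(a)\}$ is an applicative morphism, $F$ is computationally dense if there is $m\in B$ such that for every $b\in B$ there is $a\in A$ such that for all $a'\in A$: if $bF(a'){\downarrow}$ in $B$, then $aa'{\downarrow}$ in $A$ and $mF(aa')=bF(a')$ in $B$. Condition (in) (for such $F$ and $m$): there is $c\in B$ such that for every $b\in B$ there is $a\in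 A$ with $cb=F(a)$ and $m(cb)=b$. *)

From Stdlib Require Import List.
Import ListNotations.
Set Implicit Arguments.

Definition app_opt {A : Type} (app : A -> A -> option A)
  (x y : option A) : option A :=
  match x, y with
  | Some a, Some b => app a b
  | _, _ => None
  end.

(* K1 a, S1 a, S2 a b are the (necessarily unique) values of K a, S a, S a b,
   whose definedness is part of the pca axioms; naming them is harmless. *)
Record pca := {
  car :> Type;
  app : car -> car -> option car;
  K : car;
  S : car;
  K1 : car -> car;
  S1 : car -> car;
  S2 : car -> car -> car;
  K1_spec : forall a, app K a = Some (K1 a);
  K_spec : forall a b, app (K1 a) b = Some a;
  S1_spec : forall a, app S a = Some (S1 a);
  S2_spec : forall a b, app (S1 a) b = Some (S2 a b);
  S_spec : forall a b c,
    app (S2 a b) c = app_opt app (app a c) (app b c)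
}.

Section Combinators.
Variable A : pca.

Definition I_ : A := S2 A (K A) (K A).
Definition top : A := K A.
Definition bot : A := K1 A I_.
(* Pairing: p a b = \z. z a b = S (S I (K a)) (K b) *)
Definition pair (a b : A) : A := S2 A (S2 A I_ (K1 A a)) (K1 A b).
(* Coding of finite sequences: [] = p top top, [u0,...] = p bot (p u0 [...]).
   With this coding, [b] * [u0,...,u_{n-1}] = code (b :: u0 :: ... :: u_{n-1}). *)
Fixpoint code (l : list A) : A :=
  match l with
  | [] => pair top top
  | u :: l' => pair bot (pair u (code l'))
  end.

Variable f : A -> option A.

Definition dialogue (a b : A) (u : list A) : Prop :=
  forall i, i < length u ->
    exists v, app A a (code (b :: firstn i u)) = Some (pair bot v)
              /\ f v = Some (nth i u (K A)).

Definition appf (a b c : A) : Prop :=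
  exists u, dialogue a b u /\ app A a (code (b :: u)) = Some (pair top c).
End Combinators.

(* Partial applicative structures given by an application relation
   (papp x y z  means  x y = z). *)
Record PAS := { pcar :> Type; papp : pcar -> pcar -> pcar -> Prop }.

Definition PAS_of (A : pca) : PAS := {| pcar := car A; papp := fun x y z => app A x y = Some z |}.
Definition PAS_rel (A : pca) (f : A -> option A) : PAS :=
  {| pcar := car A; papp := @appf A f |}.

Definition pdefined (B : PAS) (x y : B) : Prop := exists z, papp B x y z.

(* a |-> {F a} is an applicative morphism: there is a realizer r in B with
   r F(a) F(a') defined and equal to F(a a') whenever a a' is defined. *)
Definition singleton_applicative_morphism (A B : PAS) (F : A -> B) : Prop :=
  exists r : B, forall a a' x, papp A a a' x ->
    exists r1, papp B r (F a) r1 /\ papp B r1 (F a') (F x).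

Definition comp_dense_witness (A B : PAS) (F : A -> B) (m : B) : Prop :=
  forall b : B, exists a : A, forall a' : A,
    @pdefined B b (F a') ->
    exists aa', papp A a a' aa' /\
      forall y, papp B b (F a') y -> papp B m (F aa') y.

Definition computationally_dense (A B : PAS) (F : A -> B) : Prop :=
  @singleton_applicative_morphism A B F /\ exists m, @comp_dense_witness A B F m.

Definition cond_in (A B : PAS) (F : A -> B) (m : B) : Prop :=
  exists c : B, forall b : B, exists a : A, papp B c b (F a) /\ papp B m (F a) b.

(* Relative to A[f], the base pca A computes a function "for free" whenever it
   answers the first query [b] of a dialogue with a final answer p⊤c: the empty
   dialogue then witnesses a ·^f b = c.  So every A-combinator that inspects only
   the head of its input sequence can be transported to A[f] verbatim, which gives
   the applicative morphism and the combinator c of condition (in).  For density,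
   let m decode the head p b a' of a sequence [p b a', u0, ...] and run b on
   [a', u0, ...]: then m and p b a' conduct exactly the dialogue of b and a', so
   b ·^f a' = y implies m ·^f (p b a') = y, and a := λx. p b x works. *)
From Pilot Require Import Defs.
From Stdlib Require Import List.
Import ListNotations.

Section CombinatoryCompleteness.
Variable A : pca.
Local Notation ap := (Defs.app A).

Inductive tm := Var (n : nat) | Cst (a : A) | Ap (t1 t2 : tm).

Fixpoint eval (rho : nat -> A) (t : tm) : option A :=
  match t with
  | Var n => Some (rho n)
  | Cst a => Some a
  | Ap t1 t2 => app_opt ap (eval rho t1) (eval rho t2)
  end.

Definition update (rho : nat -> A) (n : nat) (x : A) : nat -> A :=
  fun m => if Nat.eqb m n then x else rho m.

Fixpoint abstract (n : nat) (t : tm) : tm :=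
  match t with
  | Var m => if Nat.eqb m n then Cst (I_ A) else Ap (Cst (K A)) (Var m)
  | Cst a => Cst (K1 A a)
  | Ap t1 t2 => Ap (Ap (Cst (S A)) (abstract n t1)) (abstract n t2)
  end.

Lemma I_spec x : ap (I_ A) x = Some x.
Proof. unfold I_. rewrite S_spec, K1_spec. apply K_spec. Qed.

Lemma eval_abstract n t rho : exists v, eval rho (abstract n t) = Some v /\
  forall x, ap v x = eval (update rho n x) t.
Proof.
  induction t as [m|a|t1 [v1 [E1 H1]] t2 [v2 [E2 H2]]]; simpl.
  - unfold update. destruct (Nat.eqb m n).
    + exists (I_ A). split; [reflexivity|]. intro; apply I_spec.
    + exists (K1 A (rho m)). split; [apply K1_spec|]. intro; apply K_spec.
  - exists (K1 A a). split; [reflexivity|]. intro; apply K_spec.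
  - exists (S2 A v1 v2). rewrite E1, E2. simpl. rewrite S1_spec. simpl.
    rewrite S2_spec. split; [reflexivity|].
    intro x. rewrite S_spec, H1, H2. reflexivity.
Qed.

Lemma lambda_exists n t rho : exists v, forall x, ap v x = eval (update rho n x) t.
Proof. destruct (eval_abstract n t rho) as [v [_ Hv]]. exists v. exact Hv. Qed.

Lemma app_pair a b z :
  ap (pair A a b) z = match ap z a with Some w => ap w b | None => None end.
Proof.
  unfold pair. rewrite S_spec, S_spec, I_spec, K_spec, K_spec. simpl.
  destruct (ap z a); reflexivity.
Qed.

Lemma pair_top a b : ap (pair A a b) (top A) = Some a.
Proof. rewrite app_pair. unfold top. rewrite K1_spec. apply K_spec. Qed.

Lemma pair_bot a b : ap (pair A a b) (bot A) = Some b.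
Proof. rewrite app_pair. unfold bot. rewrite K_spec. apply I_spec. Qed.

Definition pair_tm (t1 t2 : tm) : tm :=
  Ap (Ap (Cst (S A)) (Ap (Ap (Cst (S A)) (Cst (I_ A))) (Ap (Cst (K A)) t1)))
     (Ap (Cst (K A)) t2).
Definition fst_tm (t : tm) : tm := Ap t (Cst (top A)).
Definition snd_tm (t : tm) : tm := Ap t (Cst (bot A)).
Definition hd_tm (t : tm) : tm := fst_tm (snd_tm t).
Definition tl_tm (t : tm) : tm := snd_tm (snd_tm t).

Lemma eval_pair_tm rho t1 t2 x y : eval rho t1 = Some x -> eval rho t2 = Some y ->
  eval rho (pair_tm t1 t2) = Some (pair A x y).
Proof.
  intros H1 H2. simpl. rewrite H1, H2.
  repeat (simpl; first [rewrite S1_spec | rewrite S2_spec | rewrite K1_spec]).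
  reflexivity.
Qed.

Lemma eval_fst_tm rho t a b : eval rho t = Some (pair A a b) ->
  eval rho (fst_tm t) = Some a.
Proof. intro H. simpl. rewrite H. apply pair_top. Qed.

Lemma eval_snd_tm rho t a b : eval rho t = Some (pair A a b) ->
  eval rho (snd_tm t) = Some b.
Proof. intro H. simpl. rewrite H. apply pair_bot. Qed.

Lemma eval_hd_tm rho t b l : eval rho t = Some (code A (b :: l)) ->
  eval rho (hd_tm t) = Some b.
Proof. intro H. eapply eval_fst_tm, eval_snd_tm, H. Qed.

Lemma eval_tl_tm rho t b l : eval rho t = Some (code A (b :: l)) ->
  eval rho (tl_tm t) = Some (code A l).
Proof. intro H. eapply eval_snd_tm, eval_snd_tm, H. Qed.

End CombinatoryCompleteness.

Arguments Var {A}. Arguments Cst {A}. Arguments Ap {A}.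

Section RelativizedApplication.
Variable A : pca.
Variable f : A -> option A.
Local Notation ap := (Defs.app A).
Local Notation apf := (appf A f).

Lemma appf_of_head a b c : ap a (code A [b]) = Some (pair A (top A) c) -> apf a b c.
Proof.
  intro H. exists []. split; [|exact H].
  intros i Hi. exfalso. inversion Hi.
Qed.

Lemma appf_simulate m x b y z :
  (forall l, ap m (code A (x :: l)) = ap b (code A (y :: l))) ->
  apf b y z -> apf m x z.
Proof.
  intros Hsim [u [Hdia Hans]]. exists u. split.
  - intros i Hi. destruct (Hdia i Hi) as [v [Hv Hf]].
    exists v. rewrite Hsim. auto.
  - rewrite Hsim. exact Hans.
Qed.

Lemma unpairing_combinator_exists : exists m : A,
  forall b x l, ap m (code A (pair A b x :: l)) = ap b (code A (x :: l)).
Proof.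
  set (u := Var 0 : tm A).
  destruct (lambda_exists A 0
      (Ap (fst_tm A (hd_tm A u))
          (pair_tm A (Cst (bot A))
             (pair_tm A (snd_tm A (hd_tm A u)) (tl_tm A u)))) (fun _ => K A))
    as [m Hm].
  exists m. intros b x l. rewrite Hm.
  assert (Hu : eval A (update A (fun _ => K A) 0 (code A (pair A b x :: l))) u
               = Some (code A (pair A b x :: l))) by reflexivity.
  cbn [eval].
  rewrite (eval_fst_tm A _ _ b x (eval_hd_tm A _ _ _ _ Hu)).
  rewrite (eval_pair_tm A _ _ _ (bot A) (pair A x (code A l))); [reflexivity..|].
  apply eval_pair_tm.
  - exact (eval_snd_tm A _ _ b x (eval_hd_tm A _ _ _ _ Hu)).
  - exact (eval_tl_tm A _ _ _ _ Hu).
Qed.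

Section Unpairing.
Variable m : A.
Hypothesis m_unpair :
  forall b x l, ap m (code A (pair A b x :: l)) = ap b (code A (x :: l)).

Lemma appf_unpair b x y : apf b x y -> apf m (pair A b x) y.
Proof. apply appf_simulate. intro l. apply m_unpair. Qed.

Lemma id_comp_dense_witness :
  @comp_dense_witness (PAS_of A) (PAS_rel A f) (fun a => a) m.
Proof.
  intro b. cbn in b.
  destruct (lambda_exists A 0 (pair_tm A (Cst b) (Var 0)) (fun _ => K A)) as [a Ha].
  exists a. intros x _. exists (pair A b x). split.
  - cbn. rewrite Ha. apply eval_pair_tm; reflexivity.
  - apply appf_unpair.
Qed.

(* c ·^f b = p E b, where E ·^f b = b; then m ·^f (p E b) = E ·^f b = b. *)
Lemma id_cond_in : @cond_in (PAS_of A) (PAS_rel A f) (fun a => a) m.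
Proof.
  set (rho := fun _ : nat => K A).
  set (u := Var 0 : tm A).
  destruct (lambda_exists A 0 (pair_tm A (Cst (top A)) (hd_tm A u)) rho) as [E HE].
  destruct (lambda_exists A 0
      (pair_tm A (Cst (top A)) (pair_tm A (Cst E) (hd_tm A u))) rho) as [c Hc].
  exists c. intro b. exists (pair A E b). split.
  - apply appf_of_head. rewrite Hc.
    apply eval_pair_tm; [reflexivity|].
    apply eval_pair_tm; [reflexivity|]. now apply (eval_hd_tm A _ _ _ []).
  - apply appf_unpair, appf_of_head. rewrite HE.
    apply eval_pair_tm; [reflexivity|]. now apply (eval_hd_tm A _ _ _ []).
Qed.

End Unpairing.

(* r ·^f a = r_a and r_a ·^f a' = a a', both answered at the first query. *)
Lemma id_applicative_morphism :
  @singleton_applicative_morphism (PAS_of A) (PAS_rel A f) (fun a => a).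
Proof.
  set (rho := fun _ : nat => K A).
  set (body := pair_tm A (Cst (top A)) (Ap (hd_tm A (Var 0)) (hd_tm A (Var 1)))).
  destruct (lambda_exists A 0 (pair_tm A (Cst (top A)) (abstract A 1 body)) rho)
    as [r Hr].
  exists r. intros a a' x Hx. cbn in a, a', x, Hx |- *.
  destruct (eval_abstract A 1 body (update A rho 0 (code A [a]))) as [ra [Era Hra]].
  exists ra. split; apply appf_of_head.
  - rewrite Hr. apply eval_pair_tm; [reflexivity|exact Era].
  - rewrite Hra. apply eval_pair_tm; [reflexivity|].
    cbn [eval].
    rewrite (eval_hd_tm A _ _ a []), (eval_hd_tm A _ _ a' []) by reflexivity.
    exact Hx.
Qed.

End RelativizedApplication.

Theorem mainTheorem9 (A : pca) (f : A -> option A) :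
  @singleton_applicative_morphism (PAS_of A) (@PAS_rel A f) (fun a => a) /\
  exists m : A,
    @comp_dense_witness (PAS_of A) (@PAS_rel A f) (fun a => a) m /\
    @cond_in (PAS_of A) (@PAS_rel A f) (fun a => a) m.
Proof.
  split; [exact (id_applicative_morphism A f)|].
  destruct (unpairing_combinator_exists A) as [m Hm].
  exists m. split.
  - exact (id_comp_dense_witness A f m Hm).
  - exact (id_cond_in A f m Hm).
Qed.
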